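(* Let $n\ge 3$ and let $T_{W_n}(x,y)$ be the Tutte polynomial of the wheel graph $W_n$. Then $$1+T_{W_n}(1,x)=\sum_{k\ge0}a_{k,n}x^k,$$ where $a_{k,n}$ is the number of subgraphs of the cycle graph $C_n$ with exactly $k$ edges (a subgraph being a pair $(A,E_A)$ with $A\subseteq[n]$ non-empty and $E_A$ a set of edges of $C_n$ with both endpoints in $A$).
   Context: $C_n$ is the cycle graph on $[n]=\{1,\ldots,n\}$ with edges $\{i,i+1\}$ ($1\le i<n$) and $\{n,1\}$; $W_n$ is obtained from $C_n$ by adding a vertex $0$ adjacent to all vertices of $[n]$. $T_G(x,y)$ is the standard bivariate Tutte polynomial. *)

From mathcomp Require Import all_boot all_order all_algebra.
Set Implicit Arguments. Unset Strict Implicit. Unset Printing Implicit Defensive.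
Import GRing.Theory.
Local Open Scope ring_scope.

(* A finite simple graph is given by a vertex finType T and an adjacency
   relation adj (assumed symmetric, loops ignored). *)
Definition edges (T : finType) (adj : rel T) : {set {set T}} :=
  [set e : {set T} | [exists u, exists v, [&& u != v, adj u v & e == [set u; v]]]].

Definition ncomp (T : finType) (A : {set {set T}}) : nat :=
  n_comp (connect (fun u v => [set u; v] \in A)) [set: T].

Definition rk (T : finType) (A : {set {set T}}) : nat := (#|T| - ncomp A)%N.

(* Taking R = {poly {poly int}} and x, y the two variables gives the formal
   bivariate polynomial. *)
Definition tutte (R : comNzRingType) (T : finType) (adj : rel T) (x y : R) : R :=
  \sum_(A in powerset (edges adj))
     (x - 1) ^+ (rk (edges adj) - rk A) * (y - 1) ^+ (#|A| - rk A).

(* Cycle C_n on vertices 1..n (edges {i,i+1}, 1<=i<n, and {n,1}),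
   realised inside 'I_n.+1 (vertex 0 is not a vertex of C_n). *)
Definition cyc_adj (n : nat) : rel nat := fun i j =>
  [&& (1 <= i <= n)%N, (1 <= j <= n)%N &
      [|| j == i.+1, i == j.+1, (i == 1%N) && (j == n) | (i == n) && (j == 1%N)]].

Definition wheel_adj (n : nat) : rel 'I_n.+1 := fun i j =>
  [|| cyc_adj n i j, (i == 0 :> nat) && (1 <= j)%N | (j == 0 :> nat) && (1 <= i)%N].

Definition cycle_adj (n : nat) : rel 'I_n.+1 := fun i j => cyc_adj n i j.

Definition a_kn (k n : nat) : nat :=
  #|[set AE : {set 'I_n.+1} * {set {set 'I_n.+1}} |
      [&& AE.1 != set0, ord0 \notin AE.1,
          AE.2 \subset edges (@cycle_adj n),
          [forall e in AE.2, e \subset AE.1] & #|AE.2| == k]]|.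

(* An edge set of W_n consists of spokes {0, i} for i in S and rims {i, i+1} for i in R,
   with S, R subsets of [n].  At x = 1 the Tutte polynomial keeps only the connected edge
   sets, T(1, x) = sum of (x - 1)^(|S| + |R| - n), and the extra 1 is the term of the
   all-rim edge set (S, R) = ({}, [n]).  These "good" pairs are in bijection with triples
   (W, I, F), where (W, I) is a subgraph of C_n (a rim is named by its first vertex) and
   F is a subset of I, with |S| + |R| - n = |F|: I is the set of rims of R from which one
   walks forwards along R to a spoke, W = I u S and F = I n S; conversely S = F u (W \ I)
   and R = I u {v | v + 1 not in W}.  Summing (x - 1)^|F| over the subsets F of I gives
   x^|I|. *)

From mathcomp Require Import all_boot all_order all_algebra zify.

Set Implicit Arguments.
Unset Strict Implicit.
Unset Printing Implicit Defensive.

Import GRing.Theory.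

Section Connect.
Variables (T : finType) (r : rel T).

Lemma connect_preserved (P : pred T) :
  (forall u v, r u v -> P u -> P v) -> forall x y, connect r x y -> P x -> P y.
Proof.
move=> Pr x y /connectP[p + ->]; elim: p x => //= z p IHp x /andP[rxz rzp] Px.
exact: IHp rzp (Pr _ _ rxz Px).
Qed.

Hypothesis r_sym : symmetric r.

Let connect_r_sym : connect_sym (connect r).
Proof. by apply: sym_connect_sym => x y; rewrite (sym_connect_sym r_sym). Qed.

Let connect_connect : connect (connect r) =2 connect r.
Proof.
move=> x y; apply/idP/idP => [|/connect1 //].
exact: connect_sub.
Qed.

Lemma n_comp_connect_split x0 :
  n_comp (connect r) [set: T] = (1 + n_comp (connect r) [predC connect r x0])%N.
Proof.
rewrite (eq_n_comp_r (a' := T)); last by move=> z; rewrite !inE.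
rewrite (n_compC (connect (connect r) x0)) n_comp_connect //.
by congr (_ + _)%N; apply: eq_n_comp_r => z; rewrite !inE connect_connect.
Qed.

Lemma n_comp_connect_eq1 x0 :
  (n_comp (connect r) [set: T] == 1%N) = [forall v, connect r x0 v].
Proof.
rewrite (n_comp_connect_split x0) -[1%N]addn0 eqn_add2l.
apply/eqP/forallP => [n0 v | conn]; last first.
  by apply: eq_card0 => z; rewrite !inE conn andbF.
have := card0_eq n0 (fingraph.root (connect r) v).
rewrite !inE (roots_root connect_r_sym) /= => /negbFE x0_root.
apply: connect_trans x0_root _; rewrite -connect_connect connect_r_sym.
exact: connect_root.
Qed.

End Connect.

Lemma eq_set2 (T : finType) (a b c d : T) :
  ([set a; b] == [set c; d]) = (a == c) && (b == d) || (a == d) && (b == c).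
Proof.
apply/eqP/idP => [E | /orP[] /andP[/eqP-> /eqP->] //]; last exact: setUC.
have : [&& a \in [set c; d], b \in [set c; d], c \in [set a; b] & d \in [set a; b]].
  by rewrite E !set21 !set22 -E set21 set22.
rewrite !inE => /and4P[/orP[]/eqP-> /orP[]/eqP-> /orP[]/eqP h3 /orP[]/eqP h4];
  by rewrite ?h3 ?h4 ?eqxx ?orbT.
Qed.

Lemma sum_subset_expr_card (R : comNzRingType) (T : finType) (a : R) (I : {set T}) :
  (\sum_(F : {set T} | F \subset I) a ^+ #|F| = (a + 1) ^+ #|I|)%R.
Proof.
rewrite -prodr_const [RHS]big_mkcond /=.
transitivity (\prod_(i : T) ((if i \in I then a else 0) + 1))%R; last first.
  by apply: eq_bigr => i _; case: (i \in I); rewrite ?add0r.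
rewrite bigA_distr big_mkcond /=; apply: eq_bigr => F _; rewrite -big_mkcond /=.
case: (boolP (F \subset I)) => [sFI | /subsetPn[i iF iI]].
  by rewrite -prodr_const; apply: eq_bigr => i iF; rewrite (subsetP sFI).
by rewrite (bigD1 i) //= (negbTE iI) mul0r.
Qed.

Section SpanningSubgraphs.
Local Open Scope ring_scope.
Variable T : finType.
Implicit Type A : {set {set T}}.

Definition eadj A : rel T := fun u v => [set u; v] \in A.

Lemma eadj_sym A : symmetric (eadj A).
Proof. by move=> u v; rewrite /eadj setUC. Qed.

Lemma ncomp_gt0 A (x0 : T) : (0 < ncomp A)%N.
Proof. by rewrite /ncomp (n_comp_connect_split (eadj_sym A) x0). Qed.

Lemma ncomp_le_card A : (ncomp A <= #|T|)%N.
Proof. exact: max_card. Qed.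

Lemma ncomp_eq1 A (x0 : T) : (ncomp A == 1%N) = [forall v, connect (eadj A) x0 v].
Proof. exact: n_comp_connect_eq1 (eadj_sym A) x0. Qed.

Lemma tutte1 (R : comNzRingType) (adj : rel T) (y : R) :
  ncomp (edges adj) = 1%N ->
  tutte adj 1 y = \sum_(A in powerset (edges adj) | ncomp A == 1%N)
                    (y - 1) ^+ (#|A| - #|T|.-1).
Proof.
move=> connE; have /card_gt0P[x0 _] : (0 < #|T|)%N.
  by have := ncomp_le_card (edges adj); rewrite connE.
rewrite /tutte big_mkcondr /=; apply: eq_bigr => A _.
rewrite /rk connE subn1 subrr.
have c_gt0 := ncomp_gt0 A x0; have c_le := ncomp_le_card A.
case: eqP => [-> | c_ne1]; first by rewrite !subn1 subnn expr0 mul1r.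
by rewrite expr0n; case: eqP => [|_]; [lia | rewrite mul0r].
Qed.

End SpanningSubgraphs.

Section Wheel.
Variable n : nat.
Hypothesis n_ge3 : (3 <= n)%N.

Local Notation V := 'I_n.+1.
Local Notation hub := (ord0 : V).

Definition cycle_vs : {set V} := [set v : V | 0 < v].

(* The cyclic successor and predecessor on [1..n]; their values at the hub are junk. *)
Definition nxt (v : V) : V := inord (if v == n :> nat then 1 else v.+1).
Definition prv (v : V) : V := inord (if v <= 1 then n else v.-1).

Lemma nxt_spec (v : V) :
  (v = n :> nat /\ nxt v = 1 :> nat) \/ (v < n /\ nxt v = v.+1 :> nat).
Proof. by rewrite /nxt; have := ltn_ord v; case: eqP => ? ?; rewrite inordK; lia. Qed.

Lemma prv_spec (v : V) :
  (v <= 1 /\ prv v = n :> nat) \/ (1 < v /\ prv v = v.-1 :> nat).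
Proof. by rewrite /prv; have := ltn_ord v; case: (leqP v 1) => ? ?; rewrite inordK; lia. Qed.

Lemma in_cycle_vs (v : V) : (v \in cycle_vs) = (0 < v).
Proof. by rewrite inE. Qed.

Lemma card_cycle_vs : #|cycle_vs| = n.
Proof.
have -> : cycle_vs = [set~ hub] by apply/setP => v; rewrite !inE -val_eqE lt0n.
by rewrite cardsC1 card_ord.
Qed.

Lemma nxt_gt0 (v : V) : 0 < nxt v.
Proof. by have := nxt_spec v; lia. Qed.

Lemma prv_gt0 (v : V) : 0 < prv v.
Proof. by have := prv_spec v; lia. Qed.

Lemma nxtK (v : V) : 0 < v -> prv (nxt v) = v.
Proof. by move=> v_gt0; apply: ord_inj; have := prv_spec (nxt v); have := nxt_spec v; lia. Qed.

Lemma prvK (v : V) : 0 < v -> nxt (prv v) = v.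
Proof.
move=> v_gt0; apply: ord_inj.
by have := nxt_spec (prv v); have := prv_spec v; have := ltn_ord v; lia.
Qed.

Lemma nxt_neq (v : V) : nxt v != v.
Proof. by rewrite -val_eqE /=; apply/eqP; have := nxt_spec v; lia. Qed.

Lemma nxt2_neq (v : V) : 0 < v -> nxt (nxt v) != v.
Proof.
move=> v_gt0; rewrite -val_eqE /=; apply/eqP.
by have := nxt_spec (nxt v); have := nxt_spec v; lia.
Qed.

Lemma cycle_ind (P : pred V) :
  (exists2 v : V, 0 < v & P v) -> (forall u : V, 0 < u -> P u -> P (nxt u)) ->
  forall w : V, 0 < w -> P w.
Proof.
move=> [v v_gt0 Pv] Pnxt.
have Pnxt_inord k : 0 < k <= n -> P (inord k) -> P (inord (if k == n then 1 else k.+1)).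
  by move=> /andP[k_gt0 k_le_n] /(Pnxt _); rewrite /nxt inordK //; apply.
have up a b : 0 < a -> a <= b <= n -> P (inord a) -> P (inord b).
  move=> a_gt0; elim: b => [|b IHb] /andP[a_le b_le]; first by lia.
  move: a_le; rewrite leq_eqVlt => /orP[/eqP <- // | a_le_b /IHb Pb].
  have b_ne_n : b != n by lia.
  by have := Pnxt_inord b; rewrite (negbTE b_ne_n); apply; [lia | apply: Pb; lia].
have Pn : P (inord n) by apply: (up v); rewrite ?inord_val // -ltnS ltn_ord leqnn.
have P1 : P (inord 1) by have := Pnxt_inord n; rewrite eqxx; apply; lia.
by move=> w w_gt0; rewrite -[w]inord_val; apply: (up 1); rewrite // w_gt0 -ltnS ltn_ord.
Qed.

Lemma cycle_ind_prv (P : pred V) :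
  (exists2 v : V, 0 < v & P v) -> (forall u : V, 0 < u -> P u -> P (prv u)) ->
  forall w : V, 0 < w -> P w.
Proof.
move=> [v v_gt0 Pv] Pprv w w_gt0; apply: contraT => nPw.
have notP_nxt (u : V) : 0 < u -> ~~ P u -> ~~ P (nxt u).
  by move=> u_gt0; apply: contra => /(Pprv _ (nxt_gt0 u)); rewrite nxtK.
by have := cycle_ind (P := predC P) (ex_intro2 _ _ w w_gt0 nPw) notP_nxt v_gt0; rewrite /= Pv.
Qed.

(* Two solutions of f v = a v && (b v || f (nxt v)) on the cycle agree unless a v && ~~ b v
   holds all around, when the recursion never terminates. *)
Lemma cycle_rec_uniq (a b f g : pred V) :
  (forall v : V, 0 < v -> f v = a v && (b v || f (nxt v))) ->
  (forall v : V, 0 < v -> g v = a v && (b v || g (nxt v))) ->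
  (exists2 v : V, 0 < v & ~~ a v || b v) ->
  forall v : V, 0 < v -> f v = g v.
Proof.
move=> fE gE [w w_gt0 w_exit] v v_gt0; apply: contraTeq isT => f_neq_g.
pose differ (u : V) := f u != g u.
have differ_nxt (u : V) : 0 < u -> differ u -> a u && ~~ b u && differ (nxt u).
  by move=> u_gt0; rewrite /differ fE // gE //; case: (a u); case: (b u).
have all_differ : forall u : V, 0 < u -> differ u.
  apply: cycle_ind; first by exists v.
  by move=> u u_gt0 /(differ_nxt _ u_gt0) /andP[].
have /andP[/andP[aw nbw] _] := differ_nxt w w_gt0 (all_differ w w_gt0).
by rewrite aw (negbTE nbw) in w_exit.
Qed.

Lemma cyc_adjE (u v : V) :
  cyc_adj n u v = (0 < u) && (v == nxt u) || (0 < v) && (u == nxt v).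
Proof.
rewrite /cyc_adj -!val_eqE /=.
by have := nxt_spec u; have := nxt_spec v; have := ltn_ord u; have := ltn_ord v; lia.
Qed.

Definition spoke (i : V) : {set V} := [set hub; i].
Definition rim (i : V) : {set V} := [set i; nxt i].

Definition wheel_sub (S R : {set V}) : {set {set V}} := spoke @: S :|: rim @: R.

Lemma spoke_inj : injective spoke.
Proof. by move=> i j /eqP; rewrite eq_set2 eqxx /= => /orP[/eqP | /andP[/eqP <- /eqP]]. Qed.

Lemma rim_inj : {in cycle_vs &, injective rim}.
Proof.
move=> i j _; rewrite in_cycle_vs => j_gt0 /eqP.
rewrite eq_set2 => /orP[/andP[/eqP //] | /andP[/eqP i_nxt /eqP nxt_i]].
by have := nxt2_neq j_gt0; rewrite -i_nxt nxt_i eqxx.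
Qed.

Lemma spoke_neq_rim (i j : V) : 0 < i -> spoke j != rim i.
Proof.
by move=> i_gt0; rewrite eq_set2 -!val_eqE /=; have := nxt_gt0 i; lia.
Qed.

Lemma edges_wheel : edges (@wheel_adj n) = wheel_sub cycle_vs cycle_vs.
Proof.
apply/setP => e; rewrite !inE; apply/existsP/orP.
  case=> u /existsP[v /and3P[_]]; rewrite /wheel_adj cyc_adjE => adj_uv /eqP ->.
  case/or3P: adj_uv => [/orP[] /andP[? /eqP ->] | /andP[/eqP u0 ?] | /andP[/eqP v0 ?]].
  - by right; apply/imsetP; exists u; rewrite ?in_cycle_vs.
  - by right; apply/imsetP; exists v; rewrite ?in_cycle_vs // /rim setUC.
  - have -> : u = hub by apply: ord_inj.
    by left; apply/imsetP; exists v; rewrite ?in_cycle_vs.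
  - have -> : v = hub by apply: ord_inj.
    by left; apply/imsetP; exists u; rewrite ?in_cycle_vs // /spoke setUC.
case=> /imsetP[i]; rewrite in_cycle_vs => i_gt0 ->.
  exists hub; apply/existsP; exists i; rewrite eqxx andbT -val_eqE /= neq_ltn i_gt0.
  by rewrite /wheel_adj /= i_gt0.
exists i; apply/existsP; exists (nxt i).
by rewrite eq_sym nxt_neq /wheel_adj cyc_adjE i_gt0 !eqxx.
Qed.

Lemma edges_cycle : edges (@cycle_adj n) = rim @: cycle_vs.
Proof.
apply/setP => e; rewrite !inE; apply/existsP/imsetP.
  case=> u /existsP[v /and3P[_]]; rewrite /cycle_adj cyc_adjE => adj_uv /eqP ->.
  case/orP: adj_uv => /andP[? /eqP ->].
  - by exists u; rewrite ?in_cycle_vs.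
  - by exists v; rewrite ?in_cycle_vs // /rim setUC.
case=> i; rewrite in_cycle_vs => i_gt0 ->; exists i; apply/existsP; exists (nxt i).
by rewrite eq_sym nxt_neq /cycle_adj cyc_adjE i_gt0 !eqxx.
Qed.

Lemma card_wheel_sub (S R : {set V}) : R \subset cycle_vs -> #|wheel_sub S R| = #|S| + #|R|.
Proof.
move=> sR; rewrite cardsU card_imset; last exact: spoke_inj.
rewrite card_in_imset => [|i j iR jR]; last by apply: rim_inj; apply: (subsetP sR).
have -> : spoke @: S :&: rim @: R = set0.
  apply/setP => e; rewrite !inE; apply/negP => /andP[/imsetP[i _ ->] /imsetP[j jR]].
  by apply/eqP; apply: spoke_neq_rim; rewrite -in_cycle_vs (subsetP sR).
by rewrite cards0 subn0.
Qed.

Implicit Types (S R W I F : {set V}) (u v : V).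

Local Notation adjw S R := (eadj (wheel_sub S R)).

Lemma adjw_spoke S R i : i \in S -> adjw S R hub i.
Proof. by move=> iS; rewrite /eadj inE (imset_f spoke iS). Qed.

Lemma adjw_rim S R i : i \in R -> adjw S R i (nxt i).
Proof. by move=> iR; rewrite /eadj inE (imset_f rim iR) orbT. Qed.

Lemma adjwP S R u v : adjw S R u v ->
  [|| (u == hub) && (v \in S), (v == hub) && (u \in S),
      (u \in R) && (v == nxt u) | (v \in R) && (u == nxt v)].
Proof.
rewrite /eadj inE => /orP[] /imsetP[i iSR /eqP]; rewrite eq_set2;
  by case/orP=> /andP[/eqP-> /eqP->]; rewrite iSR !eqxx ?orbT.
Qed.

Definition connected S R := [forall v, connect (adjw S R) hub v].

Lemma connected_wheel_sub S R : (ncomp (wheel_sub S R) == 1%N) = connected S R.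
Proof. exact: ncomp_eq1. Qed.

Lemma not_connected_spokeless R : R \subset cycle_vs -> ~~ connected set0 R.
Proof.
move=> sR; apply/forallP => /(_ (inord 1)) /connect_preserved conn.
have /conn : forall a b, adjw set0 R a b -> a == hub -> b == hub.
  move=> a b /adjwP; rewrite !inE !andbF /= => /orP[] /andP[aR /eqP b_nxt] /eqP a0.
  - by move: (subsetP sR _ aR); rewrite a0 in_cycle_vs.
  - by move: (nxt_gt0 b); rewrite -b_nxt a0.
by rewrite eqxx -val_eqE /= inordK //; lia.
Qed.

(* A walk along the rims in R, where the step from a to step a uses the rim with
   index edge a: forwards with edge = id and step = nxt, backwards with edge = step = prv. *)
Definition rim_walk (edge step : V -> V) R : rel V :=
  fun a b => (edge a \in R) && (b == step a).

Definition reaches (edge step : V -> V) S R v :=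
  [exists s in S, connect (rim_walk edge step R) v s].

Lemma reachesE (edge step : V -> V) S R v :
  reaches edge step S R v = (v \in S) || (edge v \in R) && reaches edge step S R (step v).
Proof.
apply/existsP/orP => [[s /andP[sS /connectP[[|a p] /= walk_vs s_last]]] | ].
- by left; rewrite -s_last.
- rewrite s_last in sS; case/andP: walk_vs => /andP[vR /eqP a_step] walk_vs; subst a.
  right; rewrite vR /=.
  by apply/existsP; exists (last (step v) p); rewrite sS; apply/connectP; exists p.
case=> [vS | /andP[vR /existsP[s /andP[sS walk]]]]; first by exists v; rewrite vS connect0.
by exists s; rewrite sS (connect_trans _ walk) // connect1 // /rim_walk vR eqxx.
Qed.

Lemma reaches_connect (edge step : V -> V) S R v :
  (forall a : V, 0 < a -> edge a \in R -> adjw S R a (step a) && (0 < step a)) ->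
  0 < v -> reaches edge step S R v -> connect (adjw S R) hub v.
Proof.
move=> walk_adj v_gt0 /existsP[s /andP[sS walk_vs]].
pose P (a : V) := (0 < a) && connect (adjw S R) a v.
have /connect_preserved/(_ _ _ walk_vs) : forall a b : V, rim_walk edge step R a b -> P a -> P b.
  move=> a b /andP[aR /eqP ->] /andP[a_gt0 conn_av].
  case/andP: (walk_adj a a_gt0 aR) => adj_ab step_gt0; rewrite /P step_gt0.
  by apply: connect_trans (connect1 _) conn_av; rewrite eadj_sym.
rewrite /P v_gt0 connect0 => /(_ isT) /andP[_ conn_sv].
exact: connect_trans (connect1 (adjw_spoke R sS)) conn_sv.
Qed.

Local Notation fwd := (reaches id nxt).
Local Notation bwd := (reaches prv prv).

Lemma fwd_connect S R v : 0 < v -> fwd S R v -> connect (adjw S R) hub v.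
Proof. by apply: reaches_connect => a _ aR; rewrite adjw_rim // nxt_gt0. Qed.

Lemma bwd_connect S R v : 0 < v -> bwd S R v -> connect (adjw S R) hub v.
Proof.
apply: reaches_connect => a a_gt0 aR; rewrite prv_gt0 andbT eadj_sym.
by have := adjw_rim S aR; rewrite prvK.
Qed.

(* By convention this holds everywhere when R contains all rims, so that the all-rim
   edge set fits the bijection. *)
Definition fw_rim S R v := (v \in R) && fwd S R (nxt v) || (cycle_vs \subset R).

Lemma fw_rimE S R v :
  0 < v -> fw_rim S R v = (v \in R) && ((nxt v \in S) || fw_rim S R (nxt v)).
Proof.
move=> v_gt0; rewrite /fw_rim; case: (boolP (cycle_vs \subset R)) => [/subsetP sR | _].
  by rewrite !orbT andbT sR // in_cycle_vs.
by rewrite !orbF reachesE.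
Qed.

Definition covered S R := forall v, 0 < v -> fw_rim S R v || bwd S R v.

Definition good S R := [&& S \subset cycle_vs, R \subset cycle_vs &
  connected S R || (S == set0) && (R == cycle_vs)].

Lemma good_covered S R : good S R -> covered S R.
Proof.
case/and3P=> sS sR /orP[/forallP conn | /andP[/eqP-> /eqP->]]; last first.
  by move=> v _; rewrite /fw_rim subxx orbT.
move=> v v_gt0; apply: contraT => v_stuck.
pose stuck (u : V) := (0 < u) && ~~ (fw_rim S R u || bwd S R u).
have /connect_preserved stuck_conn : forall a b, adjw S R a b -> stuck a -> stuck b.
  move=> a b /adjwP/or4P[/andP[/eqP-> _] | /andP[_ aS] | /andP[aR /eqP->] | /andP[bR /eqP->]];
    rewrite /stuck => /andP[a_gt0]; first by [].
  - by rewrite reachesE aS orbT.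
  - by rewrite nxt_gt0 (fw_rimE _ _ a_gt0) (reachesE _ _ _ _ (nxt a)) nxtK // aR -orbA orbCA.
  - have b_gt0 : 0 < b by rewrite -in_cycle_vs (subsetP sR).
    by rewrite (reachesE _ _ _ _ (nxt b)) nxtK // (fw_rimE _ _ b_gt0) bR b_gt0 /= -orbA orbCA.
have conn_v : connect (adjw S R) v hub by rewrite sym_connect_sym ?conn //; apply: eadj_sym.
by have := stuck_conn _ _ conn_v; rewrite /stuck v_gt0 v_stuck => /(_ isT).
Qed.

Lemma connected_of_cycle S R : (forall v, 0 < v -> connect (adjw S R) hub v) -> connected S R.
Proof.
move=> conn; apply/forallP => v; case: (posnP v) => [v0 | /conn //].
by have -> : v = hub by apply: ord_inj.
Qed.

Lemma covered_good S R :
  S \subset cycle_vs -> R \subset cycle_vs -> covered S R -> good S R.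
Proof.
move=> sS sR cov; rewrite /good sS sR /=; case: (boolP (cycle_vs \subset R)) => [sR' | R_part].
  have -> : R = cycle_vs by apply/eqP; rewrite eqEsubset sR.
  case: (set_0Vmem S) => [-> | [s sS']]; first by rewrite !eqxx orbT.
  apply/orP; left; apply: connected_of_cycle; apply: cycle_ind.
    by exists s; [rewrite -in_cycle_vs (subsetP sS) | apply/connect1/adjw_spoke].
  by move=> u u_gt0 /connect_trans; apply; apply/connect1/adjw_rim; rewrite in_cycle_vs.
apply/orP; left; apply: connected_of_cycle => v v_gt0.
case/orP: (cov v v_gt0) => [|/(bwd_connect v_gt0) //].
rewrite /fw_rim (negbTE R_part) orbF => /andP[vR /(fwd_connect (nxt_gt0 v))].
by move/connect_trans; apply; apply: connect1; rewrite eadj_sym adjw_rim.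
Qed.

Definition psiW S R := [set v in cycle_vs | fw_rim S R v || (v \in S)].
Definition psiI S R := [set v in cycle_vs | fw_rim S R v].
Definition psiF S R := [set v in cycle_vs | fw_rim S R v && (v \in S)].

Definition phiS W I F := F :|: (W :\: I).
Definition phiR W I F := I :|: [set v in cycle_vs | nxt v \notin W].

(* (W, I) is a subgraph of C_n with vertices W and rims [i, i+1] for i in I. *)
Definition cycle_sub W I :=
  [&& W \subset cycle_vs, W != set0 & [forall i in I, (i \in W) && (nxt i \in W)]].

Lemma cycle_subP W I : cycle_sub W I ->
  [/\ W \subset cycle_vs, W != set0, I \subset W & forall i, i \in I -> nxt i \in W].
Proof.
case/and3P=> sW W_ne0 /forall_inP rimsW; split=> // [|i /rimsW /andP[] //].
by apply/subsetP => i /rimsW /andP[].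
Qed.

Lemma sub_cycle_gt0 (X : {set V}) v : X \subset cycle_vs -> v \in X -> 0 < v.
Proof. by move=> sX vX; rewrite -in_cycle_vs (subsetP sX). Qed.

Lemma psi_valid S R :
  good S R -> cycle_sub (psiW S R) (psiI S R) && (psiF S R \subset psiI S R).
Proof.
move=> goodSR; have cov := good_covered goodSR; case/and3P: goodSR => sS sR _.
rewrite /cycle_sub -!andbA; apply/and4P; split.
- by apply/subsetP => v; rewrite inE => /andP[].
- have one_gt0 : 0 < (inord 1 : V) by rewrite inordK //; lia.
  case/orP: (cov _ one_gt0) => [fw1 | /existsP[s /andP[sS' _]]]; apply/set0Pn.
    by exists (inord 1); rewrite inE fw1 in_cycle_vs one_gt0.
  by exists s; rewrite inE sS' orbT (subsetP sS).
- apply/forall_inP => i; rewrite !inE => /andP[i_gt0 fw_i].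
  by rewrite i_gt0 fw_i nxt_gt0 /=; move: fw_i; rewrite fw_rimE // orbC => /andP[].
- by apply/subsetP => v; rewrite !inE => /andP[-> /andP[-> _]].
Qed.

Lemma phi_psi S R : good S R ->
  phiS (psiW S R) (psiI S R) (psiF S R) = S /\ phiR (psiW S R) (psiI S R) (psiF S R) = R.
Proof.
move=> goodSR; have cov := good_covered goodSR; case/and3P: goodSR => sS sR _.
split; apply/setP => v; rewrite !inE; case: (posnP v) => [v0 | v_gt0] /=.
- by apply/esym/negP => /(sub_cycle_gt0 sS); rewrite v0.
- by case: (fw_rim S R v); case: (v \in S).
- by apply/esym/negP => /(sub_cycle_gt0 sR); rewrite v0.
rewrite nxt_gt0 /= (fw_rimE _ _ v_gt0).
have := cov _ (nxt_gt0 v); rewrite reachesE nxtK //.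
by case: (v \in R); case: (nxt v \in S); case: (fw_rim S R (nxt v)).
Qed.

Section Phi.
Variables W I F : {set V}.
Hypotheses (WI_sub : cycle_sub W I) (sFI : F \subset I).

Local Notation S := (phiS W I F).
Local Notation R := (phiR W I F).

Let sW : W \subset cycle_vs. Proof. by case/cycle_subP: WI_sub. Qed.
Let sIW : I \subset W. Proof. by case/cycle_subP: WI_sub. Qed.
Let rimsW i : i \in I -> nxt i \in W. Proof. by case/cycle_subP: WI_sub => _ _ _; apply. Qed.

Lemma phiS_sub : S \subset W.
Proof. by rewrite subUset subDset subsetUr andbT (subset_trans sFI sIW). Qed.

Lemma phiR_sub : R \subset cycle_vs.
Proof.
by rewrite subUset (subset_trans sIW sW); apply/subsetP => v; rewrite inE => /andP[].
Qed.

Lemma fw_rim_phi v : 0 < v -> fw_rim S R v = (v \in I).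
Proof.
case: (set_0Vmem S) => [S0 | [s sS]].
  have sWI : W \subset I.
    apply/subsetP => w wW; apply: contraT => wI.
    have : w \in S by rewrite !inE wW wI orbT.
    by rewrite S0 inE.
  have [w wW] : exists w, w \in W by apply/set0Pn; case/cycle_subP: WI_sub.
  have all_I : forall u : V, 0 < u -> u \in I.
    apply: cycle_ind; first by exists w; [apply: sub_cycle_gt0 sW wW | apply: (subsetP sWI)].
    by move=> u _ /rimsW /(subsetP sWI).
  move=> v_gt0; rewrite all_I // /fw_rim; apply/orP; right.
  by apply/subsetP => u; rewrite in_cycle_vs => /all_I uI; rewrite inE uI.
apply: (cycle_rec_uniq (a := fun u => u \in R) (b := fun u => nxt u \in S)
                      (g := fun u => u \in I)) => [u|u|].
- exact: fw_rimE.
- move=> u_gt0 /=; apply/idP/idP => [uI | ].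
    rewrite inE uI /=; case: (boolP (nxt u \in I)) => [|nI]; rewrite ?orbT //.
    by rewrite orbF !inE rimsW // nI orbT.
  rewrite inE => /andP[/orP[// | ]]; rewrite inE => /andP[_ /negP nW] nSI; case: nW.
  by case/orP: nSI => [/(subsetP phiS_sub) | /(subsetP sIW)].
- exists (prv s); first exact: prv_gt0.
  by rewrite prvK ?sS ?orbT // (sub_cycle_gt0 sW) // (subsetP phiS_sub).
Qed.

Lemma psi_phi : [/\ psiW S R = W, psiI S R = I & psiF S R = F].
Proof.
have sI := subset_trans sIW sW; have sF := subset_trans sFI sI.
split; apply/setP => v; rewrite !inE; case: (posnP v) => [v0 | v_gt0] /=.
- by apply/esym/negP => /(sub_cycle_gt0 sW); rewrite v0.
- rewrite fw_rim_phi //; case: (boolP (v \in I)) => [/(subsetP sIW) -> // | vI].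
  by rewrite (negbTE (contra (subsetP sFI v) vI)).
- by apply/esym/negP => /(sub_cycle_gt0 sI); rewrite v0.
- exact: fw_rim_phi.
- by apply/esym/negP => /(sub_cycle_gt0 sF); rewrite v0.
rewrite fw_rim_phi //; case: (boolP (v \in I)) => vI /=; first by rewrite orbF.
by rewrite (negbTE (contra (subsetP sFI v) vI)).
Qed.

(* Else, going backwards from v, one would never enter the nonempty set W. *)
Lemma bwd_phi v : 0 < v -> v \notin W -> bwd S R v.
Proof.
move=> v_gt0 vW; apply: contraT => v_stuck.
have out_all : forall u : V, 0 < u -> (u \notin W) && ~~ bwd S R u.
  apply: cycle_ind_prv; first by exists v; rewrite ?vW.
  move=> u u_gt0 /andP[uW]; have pR : prv u \in R by rewrite !inE prv_gt0 prvK ?uW ?orbT.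
  rewrite reachesE pR /= => /norP[_ p_stuck]; rewrite p_stuck andbT.
  apply: contra p_stuck => pW; rewrite reachesE !inE pW.
  case: (boolP (prv u \in I)) => [/rimsW | _]; last by rewrite orbT.
  by rewrite prvK // (negbTE uW).
have [w wW] : exists w, w \in W by apply/set0Pn; case/cycle_subP: WI_sub.
by have /andP[] := out_all w (sub_cycle_gt0 sW wW); rewrite wW.
Qed.

Lemma phi_good : good S R.
Proof.
apply: covered_good; [exact: subset_trans phiS_sub sW | exact: phiR_sub |].
move=> v v_gt0; rewrite fw_rim_phi //.
case: (boolP (v \in W)) => [vW | /(bwd_phi v_gt0) ->]; last by rewrite orbT.
by rewrite reachesE; case: (boolP (v \in I)) => //= vI; rewrite !inE vW vI orbT.
Qed.

Lemma card_phi : #|S| + #|R| = #|F| + n.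
Proof.
have cardsU_disj (A B : {set V}) : [disjoint A & B] -> #|A :|: B| = #|A| + #|B|.
  by move=> AB; rewrite cardsU disjoint_setI0 // cards0 subn0.
rewrite !cardsU_disj; first last.
- by rewrite disjoint_subset; apply/subsetP => v /(subsetP sFI) vI; rewrite !inE vI.
- by rewrite disjoint_subset; apply/subsetP => v /rimsW nW; rewrite !inE nW andbF.
have -> : [set v in cycle_vs | nxt v \notin W] = prv @: (cycle_vs :\: W).
  apply/setP => v; rewrite !inE; apply/andP/imsetP => [[v_gt0 nW] | [w]].
    by exists (nxt v); rewrite ?nxtK // !inE nW nxt_gt0.
  by rewrite !inE => /andP[wW w_gt0] ->; rewrite prv_gt0 prvK.
rewrite card_in_imset => [|u w]; last first.
  by rewrite !inE => /andP[_ u_gt0] /andP[_ w_gt0] /(congr1 nxt); rewrite !prvK.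
rewrite (cardsDS sIW) (cardsDS sW) card_cycle_vs.
have := subset_leq_card sIW; have := subset_leq_card sW; rewrite card_cycle_vs; lia.
Qed.

End Phi.

Definition sub_spokes (A : {set {set V}}) := [set i in cycle_vs | spoke i \in A].
Definition sub_rims (A : {set {set V}}) := [set i in cycle_vs | rim i \in A].

Lemma wheel_sub_split (A : {set {set V}}) :
  A \subset wheel_sub cycle_vs cycle_vs -> wheel_sub (sub_spokes A) (sub_rims A) = A.
Proof.
move=> sA; apply/setP => e; apply/idP/idP.
  by rewrite inE => /orP[] /imsetP[i]; rewrite inE => /andP[_ eA] ->.
move=> eA; have := subsetP sA _ eA; rewrite inE => /orP[] /imsetP[i i_gt0 ei]; subst e.
  by rewrite inE imset_f // inE i_gt0 eA.
by rewrite inE (imset_f rim) ?orbT // inE i_gt0 eA.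
Qed.

Lemma sub_spokes_wheel_sub S R :
  S \subset cycle_vs -> R \subset cycle_vs -> sub_spokes (wheel_sub S R) = S.
Proof.
move=> sS sR; apply/setP => v; rewrite !inE (mem_imset _ _ spoke_inj).
case: (boolP (v \in S)) => [/(sub_cycle_gt0 sS) -> // | vS] /=.
apply/negP => /andP[_ /imsetP[j /(sub_cycle_gt0 sR) j_gt0 /eqP]].
by apply/negP; apply: spoke_neq_rim.
Qed.

Lemma sub_rims_wheel_sub S R :
  S \subset cycle_vs -> R \subset cycle_vs -> sub_rims (wheel_sub S R) = R.
Proof.
move=> sS sR; apply/setP => v; rewrite !inE; case: (posnP v) => [v0 | v_gt0] /=.
  by apply/esym/negP => /(sub_cycle_gt0 sR); rewrite v0.
have /negbTE-> : rim v \notin spoke @: S.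
  by apply/imsetP => -[j _ /eqP]; apply/negP; rewrite eq_sym spoke_neq_rim.
apply/imsetP/idP => [[j jR rim_vj] | vR]; last by exists v.
by rewrite (@rim_inj v j) ?in_cycle_vs // (sub_cycle_gt0 sR).
Qed.

Local Open Scope ring_scope.

Local Notation z := ('X - 1 : {poly int}).

Lemma tutte_wheel : tutte (@wheel_adj n) 1 'X =
  \sum_(p : {set V} * {set V} |
         [&& p.1 \subset cycle_vs, p.2 \subset cycle_vs & connected p.1 p.2])
     z ^+ (#|p.1| + #|p.2| - n).
Proof.
rewrite tutte1; last first.
  apply/eqP; rewrite edges_wheel connected_wheel_sub; apply: connected_of_cycle => v v_gt0.
  by apply/connect1/adjw_spoke; rewrite in_cycle_vs.
rewrite card_ord /= edges_wheel.
rewrite (reindex_onto (fun p => wheel_sub p.1 p.2) (fun A => (sub_spokes A, sub_rims A))) /=;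
  last by move=> A /andP[]; rewrite powersetE => /wheel_sub_split.
rewrite (eq_bigl (fun p : {set V} * {set V} =>
                    [&& p.1 \subset cycle_vs, p.2 \subset cycle_vs & connected p.1 p.2])).
  by apply: eq_bigr => -[S R] /and3P[_ sR _]; rewrite card_wheel_sub.
move=> [S R] /=; rewrite powersetE connected_wheel_sub.
apply/andP/and3P => [[/andP[_ conn] /eqP[SE RE]] | [sS sR conn]].
  by split=> //; [rewrite -SE | rewrite -RE]; apply/subsetP => v; rewrite inE => /andP[].
rewrite conn sub_spokes_wheel_sub // sub_rims_wheel_sub // eqxx andbT.
by rewrite setUSS // imsetS.
Qed.

Lemma one_add_tutte_wheel : 1 + tutte (@wheel_adj n) 1 'X =
  \sum_(p : {set V} * {set V} | good p.1 p.2) z ^+ (#|p.1| + #|p.2| - n).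
Proof.
rewrite tutte_wheel [RHS](bigD1 (set0, cycle_vs)) /=;
  last by rewrite /good sub0set subxx !eqxx orbT.
rewrite cards0 card_cycle_vs subnn expr0; congr (_ + _); apply: eq_bigl => -[S R] /=.
rewrite /good -!andbA; case: (boolP (connected S R)) => conn /=.
  have -> // : (S, R) != (set0, cycle_vs).
  by apply: contraTneq conn => -[-> ->]; apply: not_connected_spokeless.
by rewrite xpair_eqE andbN !andbF.
Qed.

Lemma sum_good_valid :
  \sum_(p : {set V} * {set V} | good p.1 p.2) z ^+ (#|p.1| + #|p.2| - n) =
  \sum_(x : {set V} * {set V} * {set V} | cycle_sub x.1.1 x.1.2 && (x.2 \subset x.1.2))
     z ^+ #|x.2|.
Proof.
pose phi (x : {set V} * {set V} * {set V}) := (phiS x.1.1 x.1.2 x.2, phiR x.1.1 x.1.2 x.2).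
pose psi (p : {set V} * {set V}) := (psiW p.1 p.2, psiI p.1 p.2, psiF p.1 p.2).
rewrite (reindex_onto phi psi) => [|[S R] /phi_psi[SE RE]]; last by rewrite /phi /= SE RE.
rewrite (eq_bigl (fun x : {set V} * {set V} * {set V} =>
                    cycle_sub x.1.1 x.1.2 && (x.2 \subset x.1.2))) => [|[[W I] F] /=].
  by apply: eq_bigr => -[[W I] F] /andP[WI sFI]; rewrite card_phi // addnK.
apply/andP/andP => [[/psi_valid] | [WI sFI]].
  by rewrite /psi /phi /= => + /eqP[WE IE FE]; rewrite WE IE FE => /andP.
split; first exact: phi_good.
by rewrite /psi /phi /=; have [-> -> ->] := psi_phi WI sFI.
Qed.

Lemma sum_valid_cycle_sub :
  \sum_(x : {set V} * {set V} * {set V} | cycle_sub x.1.1 x.1.2 && (x.2 \subset x.1.2))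
     z ^+ #|x.2| =
  \sum_(q : {set V} * {set V} | cycle_sub q.1 q.2) 'X ^+ #|q.2|.
Proof.
rewrite -(pair_big_dep (fun q => cycle_sub q.1 q.2) (fun q F => F \subset q.2)
                      (fun q F => z ^+ #|F|)) /=.
by apply: eq_bigr => q _; rewrite sum_subset_expr_card subrK.
Qed.

Lemma hub_notin W : (hub \notin W) = (W \subset cycle_vs).
Proof.
apply/idP/subsetP => [hW v vW | sW]; last by apply/negP => /sW; rewrite in_cycle_vs.
rewrite in_cycle_vs lt0n; apply: contraNneq hW => v0.
by have <- : v = hub by apply: ord_inj.
Qed.

Lemma sub_rims_rims I : I \subset cycle_vs -> sub_rims (rim @: I) = I.
Proof.
by move=> sI; rewrite -[RHS](sub_rims_wheel_sub (sub0set _) sI) /wheel_sub imset0 set0U.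
Qed.

Lemma rims_sub_rims (E : {set {set V}}) : E \subset rim @: cycle_vs -> rim @: sub_rims E = E.
Proof.
move=> sE; apply/setP => e; apply/imsetP/idP => [[i] | eE]; first by rewrite inE => /andP[_ ?] ->.
by have /imsetP[i i_gt0 ei] := subsetP sE _ eE; exists i; rewrite // inE i_gt0 -ei.
Qed.

Lemma sum_cycle_subgraphs :
  \sum_(q : {set V} * {set V} | cycle_sub q.1 q.2) 'X ^+ #|q.2| =
  \sum_(p : {set V} * {set {set V}} | [&& p.1 != set0, hub \notin p.1,
        p.2 \subset edges (@cycle_adj n) & [forall e in p.2, e \subset p.1]])
     ('X ^+ #|p.2| : {poly int}).
Proof.
rewrite [RHS](reindex_onto (fun q : {set V} * {set V} => (q.1, rim @: q.2))
                           (fun p => (p.1, sub_rims p.2))) /=;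
  last by move=> -[W E] /and4P[_ _ sE _]; rewrite rims_sub_rims -?edges_cycle.
rewrite [RHS](eq_bigl (fun q : {set V} * {set V} => cycle_sub q.1 q.2)) => [|[W I] /=].
  apply: eq_bigr => -[W I] /cycle_subP[sW _ sIW _] /=; rewrite card_in_imset //.
  by apply: sub_in2 rim_inj; apply/subsetP/(subset_trans sIW sW).
have rims_in : [forall e in rim @: I, e \subset W] = [forall i in I, (i \in W) && (nxt i \in W)].
  apply/forall_inP/forall_inP => [rW i iI | rW _ /imsetP[i iI ->]].
    by have := rW _ (imset_f rim iI); rewrite subUset !sub1set.
  by rewrite subUset !sub1set rW.
rewrite edges_cycle hub_notin xpair_eqE eqxx /= rims_in; apply/idP/idP.
  by case/andP=> /and4P[W0 sW _ rW] _; apply/and3P.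
move=> WI; have [sW W0 sIW _] := cycle_subP WI; have sI := subset_trans sIW sW.
by rewrite W0 sW imsetS // sub_rims_rims // eqxx andbT; case/and3P: WI.
Qed.

End Wheel.

Local Open Scope ring_scope.

Theorem mainTheorem8 (n : nat) : (3 <= n)%N ->
  forall k : nat,
    (1 + tutte (@wheel_adj n) (1 : {poly int}) 'X)`_k = (a_kn k n)%:R.
Proof.
move=> n_ge3 k.
rewrite one_add_tutte_wheel // sum_good_valid // sum_valid_cycle_sub //.
rewrite sum_cycle_subgraphs // coef_sum /a_kn -sumr_const big_mkcond [RHS]big_mkcond.
apply: eq_bigr => -[W E] _; rewrite inE coefXn /= [k == _]eq_sym.
by rewrite !andbA; case: ifP => _; case: (#|E| == k).
Qed.
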